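(* Let $\mathcal{E}$ (expressions) and $\mathcal{C}$ (constants) be sets, $\mathrm{enc}:\mathcal{E}\to\mathcal{C}$, $\mathrm{emb}:\mathcal{C}\to\mathcal{E}$, and $\bullet:\mathcal{E}\times\mathcal{E}\to\mathcal{E}$ an associative binary operation; define $e\ast f:=e\bullet\mathrm{emb}(\mathrm{enc}(f))$ and $\ulcorner\!\ulcorner e\urcorner\!\urcorner:=\mathrm{emb}(\mathrm{enc}(e))$. Suppose there is $f_{\mathrm{diag}}\in\mathcal{E}$ with $f_{\mathrm{diag}}\ast e=\ulcorner\!\ulcorner e\ast e\urcorner\!\urcorner$ for every $e\in\mathcal{E}$. Then for every $d\in\mathcal{E}$ there exists $f\in\mathcal{E}$ with $d\ast f=f$.
   Context: This is the setting of an ''embeddable self-reference system'': a self-reference system with application $\mathrm{app}(e,c)=e\bullet\mathrm{emb}(c)$; an $f_{\mathrm{diag}}$ as in the hypothesis is called a diagonaliser, and the conclusion is called the fixed-point property for all expressions. *)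

Definition star {E C : Type} (enc : E -> C) (emb : C -> E) (op : E -> E -> E)
  (e f : E) : E := op e (emb (enc f)).

Definition quote {E C : Type} (enc : E -> C) (emb : C -> E) (e : E) : E :=
  emb (enc e).

From Pilot Require Import Defs.

(* The diagonal argument: for g := d • f_diag the expression f := g * g is a
   fixed point of d, since d * (g * g) = d • ⌜⌜g * g⌝⌝ = d • (f_diag * g)
   = (d • f_diag) * g = g * g. *)

Section SelfReference.

Variables (E C : Type) (enc : E -> C) (emb : C -> E) (op : E -> E -> E).
Hypothesis op_assoc : forall x y z : E, op x (op y z) = op (op x y) z.

Local Notation star := (star enc emb op).
Local Notation quote := (quote enc emb).

Lemma starE (e f : E) : star e f = op e (quote f).
Proof. reflexivity. Qed.

Lemma star_opA (x y z : E) : star (op x y) z = op x (star y z).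
Proof. unfold Defs.star. now rewrite op_assoc. Qed.

Variable fdiag : E.
Hypothesis hdiag : forall e : E, star fdiag e = quote (star e e).

Lemma star_diag_fixed (d : E) :
  star d (star (op d fdiag) (op d fdiag)) = star (op d fdiag) (op d fdiag).
Proof. now rewrite starE, <- hdiag, star_opA. Qed.

End SelfReference.

Theorem theorem3 (E C : Type) (enc : E -> C) (emb : C -> E) (op : E -> E -> E)
  (op_assoc : forall x y z : E, op x (op y z) = op (op x y) z)
  (fdiag : E)
  (hdiag : forall e : E, star enc emb op fdiag e = quote enc emb (star enc emb op e e)) :
  forall d : E, exists f : E, star enc emb op d f = f.
Proof.
intros d. exists (star enc emb op (op d fdiag) (op d fdiag)).
now apply star_diag_fixed.
Qed.
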